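(* Let $\mathfrak{g}$ be a nilpotent real Lie algebra endowed with a complex structure $J$. If the center $\xi$ of $\mathfrak{g}$ is not $J$-invariant, then $(\mathfrak{g},J)$ does not admit any SKT inner product.
   Context: A complex structure on $\mathfrak{g}$ is $J$ with $J^2=-\mathrm{Id}$ and $[X,Y]-[JX,JY]+J[JX,Y]+J[X,JY]=0$. A $J$-compatible inner product $g$ (i.e. $g(JX,JY)=g(X,Y)$) is SKT if the $3$-form $c(X,Y,Z)=-g([JX,JY],Z)-g([JY,JZ],X)-g([JZ,JX],Y)$ is closed under the Chevalley–Eilenberg differential, equivalently if the fundamental form $\omega=g(J\cdot,\cdot)$ satisfies $\partial\bar\partial\omega=0$. *)

From mathcomp Require Import all_boot all_order all_algebra.
From mathcomp Require Import reals.
Set Implicit Arguments. Unset Strict Implicit. Unset Printing Implicit Defensive.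
Import Order.TTheory GRing.Theory Num.Theory.
Local Open Scope ring_scope.

(* A finite-dimensional real Lie algebra is modelled as R^n = 'rV[R]_n with a
   bracket br.  Endomorphisms (J) and bilinear forms (G) are n x n matrices;
   a linear map J acts on row vectors by X |-> X *m J. *)

Record is_lie_bracket (R : nzRingType) (n : nat)
    (br : 'rV[R]_n -> 'rV[R]_n -> 'rV[R]_n) : Prop := {
  br_linl : forall (a : R) x y z, br (a *: x + y) z = a *: br x z + br y z;
  br_linr : forall (a : R) x y z, br z (a *: x + y) = a *: br z x + br z y;
  br_alt : forall x, br x x = 0;
  br_jacobi : forall x y z,
    br x (br y z) + br y (br z x) + br z (br x y) = 0 }.

(* Nilpotent: some iterated bracket ad_{x_1} ... ad_{x_k} vanishes identically,
   i.e. the k-th term of the lower central series is zero. *)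
Definition lie_nilpotent (R : nzRingType) (n : nat)
    (br : 'rV[R]_n -> 'rV[R]_n -> 'rV[R]_n) : Prop :=
  exists k : nat, forall (s : seq 'rV[R]_n) (y : 'rV[R]_n),
    size s = k -> foldr br y s = 0.

Definition in_center (R : nzRingType) (n : nat)
    (br : 'rV[R]_n -> 'rV[R]_n -> 'rV[R]_n) (z : 'rV[R]_n) : Prop :=
  forall x, br z x = 0.

Definition center_J_invariant (R : nzRingType) (n : nat)
    (br : 'rV[R]_n -> 'rV[R]_n -> 'rV[R]_n) (J : 'M[R]_n) : Prop :=
  forall z, in_center br z -> in_center br (z *m J).

(* Complex structure: J^2 = -Id and vanishing Nijenhuis tensor. *)
Definition complex_structure (R : nzRingType) (n : nat)
    (br : 'rV[R]_n -> 'rV[R]_n -> 'rV[R]_n) (J : 'M[R]_n) : Prop :=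
  J *m J = - 1%:M /\
  forall X Y, br X Y - br (X *m J) (Y *m J)
              + br (X *m J) Y *m J + br X (Y *m J) *m J = 0.

Definition bform (R : nzRingType) (n : nat) (G : 'M[R]_n) (x y : 'rV[R]_n) : R :=
  (x *m G *m y^T) ord0 ord0.

Definition is_inner_product (R : numDomainType) (n : nat) (G : 'M[R]_n) : Prop :=
  G^T = G /\ forall x : 'rV[R]_n, x != 0 -> 0 < bform G x x.

Definition J_compatible (R : nzRingType) (n : nat) (J G : 'M[R]_n) : Prop :=
  forall X Y, bform G (X *m J) (Y *m J) = bform G X Y.

Definition torsion3 (R : nzRingType) (n : nat)
    (br : 'rV[R]_n -> 'rV[R]_n -> 'rV[R]_n) (J G : 'M[R]_n)
    (X Y Z : 'rV[R]_n) : R :=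
  - bform G (br (X *m J) (Y *m J)) Z
  - bform G (br (Y *m J) (Z *m J)) X
  - bform G (br (Z *m J) (X *m J)) Y.

(* Chevalley--Eilenberg differential of a 3-form (trivial coefficients):
   dw(X0,..,X3) = sum_{i<j} (-1)^{i+j} w([Xi,Xj], X0,..^i..^j..,X3) *)
Definition CE_d3 (R : nzRingType) (n : nat)
    (br : 'rV[R]_n -> 'rV[R]_n -> 'rV[R]_n)
    (w : 'rV[R]_n -> 'rV[R]_n -> 'rV[R]_n -> R)
    (X0 X1 X2 X3 : 'rV[R]_n) : R :=
  - w (br X0 X1) X2 X3 + w (br X0 X2) X1 X3 - w (br X0 X3) X1 X2
  - w (br X1 X2) X0 X3 + w (br X1 X3) X0 X2 - w (br X2 X3) X0 X1.

Definition is_SKT (R : numDomainType) (n : nat)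
    (br : 'rV[R]_n -> 'rV[R]_n -> 'rV[R]_n) (J G : 'M[R]_n) : Prop :=
  [/\ is_inner_product G, J_compatible J G &
      forall X0 X1 X2 X3, CE_d3 br (torsion3 br J G) X0 X1 X2 X3 = 0].

From mathcomp Require Import all_boot all_order all_algebra.
From mathcomp Require Import reals.
From Stdlib Require Import Classical.
Set Implicit Arguments. Unset Strict Implicit. Unset Printing Implicit Defensive.
Import Order.TTheory GRing.Theory Num.Theory.
Local Open Scope ring_scope.

(* Pick Z central with W := JZ not central.  Vanishing of the Nijenhuis
   tensor on (Z, X) says that ad_W commutes with J, and nilpotency provides Y
   with P := [W, Y] <> 0 while [W, [x, Y]] = 0 for every x.  Evaluating dc on
   (Z, JZ, Y, JY), all terms cancel (the two surviving g([Y, JP], Z) terms by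
   the Jacobi identity) except -2 g(P, P), which positivity forbids. *)

Section Bform.
Variables (R : nzRingType) (n : nat) (G : 'M[R]_n).

Lemma bform0l y : bform G 0 y = 0.
Proof. by rewrite /bform !mul0mx mxE. Qed.

Lemma bform0r x : bform G x 0 = 0.
Proof. by rewrite /bform trmx0 mulmx0 mxE. Qed.

Lemma bformNl x y : bform G (- x) y = - bform G x y.
Proof. by rewrite /bform !mulNmx mxE. Qed.

End Bform.

Section LieBracket.
Variables (R : nzRingType) (n : nat) (br : 'rV[R]_n -> 'rV[R]_n -> 'rV[R]_n).
Hypothesis Hbr : is_lie_bracket br.

Lemma brDl x y z : br (x + y) z = br x z + br y z.
Proof. by have := br_linl Hbr 1 x y z; rewrite !scale1r. Qed.

Lemma brDr x y z : br z (x + y) = br z x + br z y.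
Proof. by have := br_linr Hbr 1 x y z; rewrite !scale1r. Qed.

Lemma br0l z : br 0 z = 0.
Proof. by apply/(addrI (br 0 z)); rewrite -brDl !addr0. Qed.

Lemma br0r z : br z 0 = 0.
Proof. by apply/(addrI (br z 0)); rewrite -brDr !addr0. Qed.

Lemma brNl x z : br (- x) z = - br x z.
Proof. by have := br_linl Hbr (-1) x 0 z; rewrite addr0 br0l addr0 !scaleN1r. Qed.

Lemma brNr x z : br z (- x) = - br z x.
Proof. by have := br_linr Hbr (-1) x 0 z; rewrite addr0 br0r addr0 !scaleN1r. Qed.

Lemma brC x y : br x y = - br y x.
Proof.
apply/eqP; rewrite -addr_eq0.
by have := br_alt Hbr (x + y); rewrite brDl !brDr !(br_alt Hbr) add0r addr0 => ->.
Qed.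

End LieBracket.

Lemma nilpotent_ad_last (R : nzRingType) (n : nat)
    (br : 'rV[R]_n -> 'rV[R]_n -> 'rV[R]_n) (f : 'rV[R]_n -> 'rV[R]_n) x0 :
  lie_nilpotent br -> f 0 = 0 -> f x0 != 0 ->
  exists Y, f Y != 0 /\ forall x, f (br x Y) = 0.
Proof.
move=> [k nil_k] f0 fx0; apply: NNPP => noY.
have long j : exists s y, size s = j /\ f (foldr br y s) != 0.
  elim: j => [|j [s [y [<- fsy]]]]; first by exists [::], x0.
  have [x fxs] : exists x, f (br x (foldr br y s)) != 0.
    apply: NNPP => allx; apply: noY; exists (foldr br y s); split=> // x.
    by apply: NNPP => fx; apply: allx; exists x; apply/eqP.
  by exists (x :: s), y.
by have [s [y [/nil_k ->]]] := long k; rewrite f0 eqxx.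
Qed.

Lemma center_not_J_invariant (R : nzRingType) (n : nat)
    (br : 'rV[R]_n -> 'rV[R]_n -> 'rV[R]_n) (J : 'M[R]_n) :
  ~ center_J_invariant br J ->
  exists Z x, in_center br Z /\ br (Z *m J) x != 0.
Proof.
move=> notinv; apply: NNPP => noZ; apply: notinv => Z HZ x.
by apply: NNPP => WZx; apply: noZ; exists Z, x; split=> //; apply/eqP.
Qed.

Section CentralTorsion.
Variables (R : nzRingType) (n : nat) (br : 'rV[R]_n -> 'rV[R]_n -> 'rV[R]_n).
Variables (J : 'M[R]_n) (Z : 'rV[R]_n).
Hypotheses (Hbr : is_lie_bracket br) (HJ : complex_structure br J).
Hypothesis HZ : in_center br Z.

Local Notation W := (Z *m J).

Lemma mulmxJJ (X : 'rV[R]_n) : X *m J *m J = - X.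
Proof. by rewrite -mulmxA HJ.1 mulmxN mulmx1. Qed.

Lemma br_center_J X : br W (X *m J) = br W X *m J.
Proof.
have := HJ.2 Z X; rewrite !HZ mul0mx sub0r addr0 addrC.
by move/eqP; rewrite subr_eq0 => /eqP.
Qed.

Lemma br_centerr X : br X Z = 0.
Proof. by rewrite (brC Hbr) HZ oppr0. Qed.

Variables (G : 'M[R]_n) (Y : 'rV[R]_n).
Hypothesis HG : J_compatible J G.
Hypothesis HY : forall x, br W (br x Y) = 0.

Lemma CE_d3_torsion_center :
  CE_d3 br (torsion3 br J G) Z W Y (Y *m J)
  = - (bform G (br W Y) (br W Y) *+ 2).
Proof.
set V := Y *m J; set P := br W Y.
have WP : br W P = 0 := HY W.
have WPJ : br W (P *m J) = 0 by rewrite br_center_J WP mul0mx.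
have WU : br W (br Y V) = 0 by rewrite (brC Hbr Y) (brNr Hbr) HY oppr0.
have WUJ : br W (br Y V *m J) = 0 by rewrite br_center_J WU mul0mx.
have WV : br W V = P *m J := br_center_J Y.
have jacobi : br V P = br Y (P *m J).
  have := br_jacobi Hbr W Y V; rewrite WU add0r (brC Hbr V W) WV (brNr Hbr) addrC.
  by move/eqP; rewrite subr_eq0 => /eqP.
rewrite /CE_d3 /torsion3 -/V !HZ !mul0mx !(br0l Hbr) !(br0r Hbr) !bform0l !bform0r.
rewrite -/P !mulmxJJ WV !mulmxJJ HG !(brNl Hbr) !(brNr Hbr) br_centerr HZ.
rewrite !(brC Hbr _ W) WPJ WUJ -/P WP jacobi.
rewrite !bformNl !(oppr0, bform0l, subr0, sub0r, opprK).
by rewrite !(addr0, add0r, subr0) opprD addrACA addNr addr0 mulr2n opprD.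
Qed.

End CentralTorsion.

Theorem proposition3p5 (R : realType) (n : nat)
    (br : 'rV[R]_n -> 'rV[R]_n -> 'rV[R]_n) (J : 'M[R]_n) :
  is_lie_bracket br -> lie_nilpotent br -> complex_structure br J ->
  ~ center_J_invariant br J ->
  forall G : 'M[R]_n, ~ is_SKT br J G.
Proof.
move=> Hbr nil HJ notinv G [[_ Gpos] HG closed].
have [Z [x0 [HZ WZx0]]] := center_not_J_invariant notinv.
have [Y [PY HY]] := nilpotent_ad_last nil (br0r Hbr _) WZx0.
have := closed Z (Z *m J) Y (Y *m J).
rewrite (CE_d3_torsion_center Hbr HJ HZ HG HY) => /eqP.
by rewrite oppr_eq0 mulrn_eq0 /= (gt_eqF (Gpos _ PY)).
Qed.
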